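(* Let $n,k,r,s$ be non-negative integers with $k\ge1$ and $0\le r,s\le 2k-1$. Then $$\det\Big(C_{2n+2i+2j+r+s}^{(2k-1)}(r\to s)\Big)_{0\le i,j\le k-1}=\begin{cases}0,&\text{if }\gcd(r+1,2k+1)\ne1\text{ or }\gcd(s+1,2k+1)\ne1,\\ (-1)^{\sum_{i=1}^k\left(\lfloor\frac{i(r+1)}{2k+1}\rfloor+\lfloor\frac{i(s+1)}{2k+1}\rfloor\right)},&\text{if }\gcd(r+1,2k+1)=\gcd(s+1,2k+1)=1.\end{cases}$$
   Context: $C_N^{(K)}(r\to s)$ is the number of lattice paths with steps $(1,1),(1,-1)$ from $(0,r)$ to $(N,s)$ never going below the $x$-axis nor above the line $y=K$. *)

From mathcomp Require Import all_boot all_algebra.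
Set Implicit Arguments. Unset Strict Implicit. Unset Printing Implicit Defensive.

(* A lattice path with steps (1,1),(1,-1) of length N is encoded by its
   sequence of steps: true = up-step (1,1), false = down-step (1,-1).
   Heights are tracked in int. *)
Fixpoint path_ok (K : nat) (h : int) (steps : seq bool) (s : int) : bool :=
  match steps with
  | [::] => h == s
  | b :: st =>
      let h' := (if b then h + 1 else h - 1)%R in
      [&& (0 <= h')%R, (h' <= K%:Z)%R & path_ok K h' st s]
  end.

Definition C (N K r s : nat) : nat :=
  #|[set t : N.-tuple bool |
      [&& (0 <= r <= K)%N & path_ok K r%:Z (tval t) s%:Z]]|.

From mathcomp Require Import all_boot all_algebra all_field zify ring.
Import GRing.Theory Num.Theory.

Set Implicit Arguments. Unset Strict Implicit. Unset Printing Implicit Defensive.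

(* For a primitive 2m-th root of unity z, with
      zsin y = z^y - z^-y and zcos l = z^l + z^-l, the count of paths from r to s
      in [0, m - 2] is -1/(4m) sum_(l < 2m) zsin((r+1)l) zsin((s+1)l) zcos(l)^N:
      both sides satisfy the same recursion, and N = 0 is the orthogonality of
      the zsin vectors.
   3. For odd m and N = 2n + 2i + 2j + r + s, the sum folds to l = 1 .. k, which
      factors the Hankel matrix as V^T D V with V the Vandermonde matrix of the
      zcos(l)^2, so its determinant is det(V)^2 times the product of the weights.
   4. Multiplication by a mod m permutes the values zsin(l), 1 <= l <= k, up to
      the sign (-1)^(sum_l floor(a l / m)) when a is a unit, and produces a zero
      factor otherwise; dilation by 2 shows that the zcos(l) multiply to 1.
      For n = r = s = 0 the Hankel matrix is L L^T with L unitriangular, so the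
      determinant is 1; dividing by this case leaves the product of the two
      dilation signs, which is the claimed value. *)

Fixpoint strip_count (K N h s : nat) : nat :=
  match N with
  | 0 => (h == s) : nat
  | N'.+1 => (if h is h'.+1 then strip_count K N' h' s else 0)
             + (if h.+1 <= K then strip_count K N' h.+1 s else 0)
  end.

Lemma sum_tuple_cons N (F : N.+1.-tuple bool -> nat) :
  \sum_(t : N.+1.-tuple bool) F t =
  \sum_(t : N.-tuple bool) F [tuple of true :: t] +
  \sum_(t : N.-tuple bool) F [tuple of false :: t].
Proof.
rewrite (reindex (fun p : bool * N.-tuple bool => [tuple of p.1 :: p.2])) /=.
  by rewrite -(pair_big predT predT (fun b (t : N.-tuple bool) => F (cons_tuple b t))) big_bool.
exists (fun t : N.+1.-tuple bool => (thead t, [tuple of behead t])).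
  by move=> [b t] _ /=; rewrite theadE; congr pair; apply: val_inj.
by move=> t _ /=; rewrite -tuple_eta.
Qed.

Lemma path_ok_count K N h s : h <= K ->
  \sum_(t : N.-tuple bool) (path_ok K (Posz h) t s%:Z : nat) = strip_count K N h s.
Proof.
elim: N h s => [|N IH] h s hK.
  rewrite (big_pred1 [tuple]) => [|t]; last by rewrite /= -val_eqE; case: t => [[]].
  by rewrite /= eqz_nat.
rewrite sum_tuple_cons /= addnC; congr addn.
  case: h hK => [|h] hK.
    by rewrite big1 // => t _; rewrite /= subr_ge0 ler0n.
  rewrite -IH ?(ltnW hK) //; apply: eq_bigr => t _ /=.
  by rewrite -addn1 PoszD addrK lez_nat ltnW.
case: ifP => hK'; last by rewrite big1 // => t _ /=; rewrite -PoszD lez_nat addn1 hK'.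
by rewrite -IH //; apply: eq_bigr => t _ /=; rewrite -PoszD lez_nat addn1 hK'.
Qed.

Lemma C_strip_count N K r s : r <= K -> C N K r s = strip_count K N r s.
Proof.
move=> hr; rewrite /C -sum1dep_card -path_ok_count // big_mkcond /=.
by apply: eq_bigr => t _; rewrite hr; case: path_ok.
Qed.

Lemma strip_count_far K N h s : h + N < s -> strip_count K N h s = 0.
Proof.
elim: N h s => [|N IH] h s hs /=; first by case: eqP => //; lia.
rewrite (_ : (if h.+1 <= K then _ else _) = 0); last by case: ifP => // _; apply: IH; lia.
by case: h hs => [|h] hs //=; rewrite IH //; lia.
Qed.

(* Each step changes the parity of the height. *)
Lemma strip_count_odd K N h s : odd (N + h + s) -> strip_count K N h s = 0.
Proof.
elim: N h s => [|N IH] h s hs /=.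
  by case: eqP => // e; move: hs; rewrite e add0n addnn odd_double.
rewrite (_ : (if h.+1 <= K then _ else _) = 0); last first.
  by case: ifP => // _; apply: IH; move: hs; rewrite !addSn !addnS.
by case: h hs => [|h] hs //=; rewrite IH //; move: hs; rewrite !addSn !addnS /= negbK.
Qed.

(* The only path climbing N levels in N steps is the all-up path. *)
Lemma strip_count_climb K N h : h + N <= K -> strip_count K N h (h + N) = 1.
Proof.
elim: N h => [|N IH] h hs /=; first by rewrite addn0 eqxx.
rewrite (_ : (if h is h'.+1 then _ else _) = 0); last first.
  by case: h hs => // h hs; apply: strip_count_far; lia.
by rewrite ifT; [rewrite -addSnnS IH //|]; lia.
Qed.

Lemma strip_count_cat K N1 N2 h s : h <= K ->
  strip_count K (N1 + N2) h s =
  \sum_(h' < K.+1) strip_count K N1 h h' * strip_count K N2 h' s.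
Proof.
elim: N1 h => [|N1 IH] h hK /=.
  rewrite (bigD1 (Ordinal (hK : h < K.+1))) //= eqxx mul1n big1 ?addn0 //.
  by move=> i /negPf; rewrite -val_eqE /= eq_sym => ->.
rewrite (eq_bigr _ (fun i _ => mulnDl _ _ _)) big_split /=; congr (_ + _).
  by case: h hK => [|h] hK; [rewrite big1 | rewrite IH //; lia].
by case: ifP => hK'; [rewrite IH | rewrite big1].
Qed.

Lemma sum_even_odd (F : nat -> nat) n :
  (\sum_(0 <= h < 2 * n) F h = \sum_(0 <= c < n) (F (2 * c) + F (2 * c).+1))%N.
Proof.
elim: n => [|n IH]; first by rewrite !big_geq.
rewrite (_ : 2 * n.+1 = (2 * n).+2)%N; last by lia.
by rewrite !big_nat_recr //= IH addnA.
Qed.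

Lemma coprime_mul_mod_inj m a x y : coprime a m -> x < m -> y < m ->
  (a * x) %% m = (a * y) %% m -> x = y.
Proof.
move=> co; wlog le : x y / x <= y.
  move=> H hx hy e; case: (leqP x y) => h; first exact: H.
  by apply/esym; apply: H => //; apply: ltnW.
move=> hx hy /eqP; rewrite eq_sym eqn_mod_dvd ?leq_mul2l ?le ?orbT //.
rewrite -mulnBr Gauss_dvdr; last by rewrite coprime_sym.
by case: (posnP (y - x)) => [|pos /(dvdn_leq pos)]; lia.
Qed.

Lemma coprime_mul_mod_sum m a x y : coprime a m -> 0 < x + y < m ->
  (a * x) %% m + (a * y) %% m != m.
Proof.
move=> co hxy; apply/negP => /eqP e.
have /eqP : (a * (x + y)) %% m = 0 by rewrite mulnDr -modnDm e modnn.
rewrite -/(dvdn m _) Gauss_dvdr; last by rewrite coprime_sym.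
by move=> /dvdn_leq; lia.
Qed.

Local Open Scope ring_scope.

Section Spectral.
Variable R : numFieldType.
Variable m : nat.
Variable z : R.
Hypothesis z_prim : (2 * m)%N.-primitive_root z.

(* For z = exp(i pi / m): zsin y = 2i sin(pi y / m), zcos l = 2 cos(pi l / m). *)
Definition zsin (y : nat) : R := z ^+ y - (z ^+ y)^-1.
Definition zcos (l : nat) : R := z ^+ l + (z ^+ l)^-1.

Lemma m_gt0 : (0 < m)%N.
Proof. by have := prim_order_gt0 z_prim; rewrite muln_gt0. Qed.

Lemma zX_neq0 y : z ^+ y != 0.
Proof.
apply: expf_neq0; apply/eqP => z0; have := prim_expr_order z_prim.
by rewrite z0 expr0n muln_eq0 /= eqn0Ngt m_gt0 /= => /eqP; rewrite eq_sym oner_eq0.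
Qed.

Lemma zX_unity y : (z ^+ y) ^+ (2 * m) = 1.
Proof. by rewrite -exprM mulnC exprM (prim_expr_order z_prim) expr1n. Qed.

Lemma z_half : z ^+ m = -1.
Proof.
have : (z ^+ m) ^+ 2 == 1 by rewrite -exprM mulnC prim_expr_order.
rewrite sqrf_eq1 => /orP [|/eqP //].
rewrite -(expr0 z) (eq_prim_root_expr z_prim) mod0n modn_small; last first.
  by rewrite ltn_Pmull // m_gt0.
by rewrite eqn0Ngt m_gt0.
Qed.

Lemma zsin0 : zsin 0 = 0.
Proof. by rewrite /zsin expr0 invr1 subrr. Qed.

Lemma zsin_shift c y : zsin (y + c * m) = (-1) ^+ c * zsin y.
Proof.
by rewrite /zsin exprD mulnC exprM z_half invfM invr_sign; ring.
Qed.

Lemma zsin_reflect c y : (y <= c * m)%N -> zsin (c * m - y) = - (-1) ^+ c * zsin y.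
Proof.
move=> hy.
have e : z ^+ (c * m - y) = (-1) ^+ c * (z ^+ y)^-1.
  apply: (mulIf (zX_neq0 y)); rewrite -exprD subnK // mulnC exprM z_half.
  by rewrite -mulrA mulVf ?mulr1 // zX_neq0.
by rewrite /zsin e invfM invrK invr_sign; ring.
Qed.

Lemma zsin_reflect1 y : (y <= m)%N -> zsin (m - y) = zsin y.
Proof. by move=> hy; rewrite -{1}[m]mul1n zsin_reflect ?mul1n // expr1 opprK mul1r. Qed.

Lemma zsin_eq0 y : (zsin y == 0) = (m %| y)%N.
Proof.
rewrite /zsin subr_eq0 -(inj_eq (mulIf (zX_neq0 y))) mulVf ?zX_neq0 // -exprD.
rewrite -(expr0 z) (eq_prim_root_expr z_prim) mod0n addnn -mul2n.
by rewrite -muln_modr muln_eq0 /=.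
Qed.

Lemma zsin_rec r l : zsin (r * l) + zsin ((r + 2) * l) = zcos l * zsin (r.+1 * l).
Proof.
rewrite /zsin /zcos (_ : (r + 2) * l = r * l + l + l)%N; last by lia.
rewrite (_ : r.+1 * l = r * l + l)%N; last by lia.
rewrite !exprD; have u0 := zX_neq0 l; have v0 := zX_neq0 (r * l).
by field; rewrite u0 v0.
Qed.

Lemma zsin_double l : zsin (2 * l) = zcos l * zsin l.
Proof. by have := zsin_rec 0 l; rewrite zsin0 add0r mul1n. Qed.

Lemma zcos_shift l : zcos (l + m) = - zcos l.
Proof. by rewrite /zcos exprD z_half mulrN1 invrN opprD. Qed.

Lemma zcos_reflect l : (l <= m)%N -> zcos (m - l) = - zcos l.
Proof.
move=> hl; have e : z ^+ (m - l) = - (z ^+ l)^-1.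
  apply: (mulIf (zX_neq0 l)); rewrite -exprD subnK // z_half.
  by rewrite mulNr mulVf ?zX_neq0.
by rewrite /zcos e invrN invrK opprD addrC.
Qed.

Lemma sum_unity_root (x : R) : x ^+ (2 * m) = 1 ->
  \sum_(l < 2 * m) x ^+ l = if x == 1 then (2 * m)%:R else 0.
Proof.
move=> hx; case: eqP => [->|/eqP ne].
  by rewrite (eq_bigr (fun _ => 1)) ?sumr_const ?card_ord // => i _; rewrite expr1n.
have := subrX1 x (2 * m); rewrite hx subrr => /esym/eqP.
by rewrite mulf_eq0 subr_eq0 (negPf ne) => /eqP.
Qed.

Lemma zsin_orthogonal a b : (1 <= a < m)%N -> (1 <= b < m)%N ->
  \sum_(l < 2 * m) zsin (a * l) * zsin (b * l) = if a == b then - (4 * m)%:R else 0.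
Proof.
move=> ha hb; set x := z ^+ a; set y := z ^+ b.
have [x0 y0] : x != 0 /\ y != 0 by split; apply: zX_neq0.
have E (l : 'I_(2 * m)) : zsin (a * l) * zsin (b * l) =
   (x * y) ^+ l - (x / y) ^+ l - (y / x) ^+ l + ((x * y)^-1) ^+ l.
  rewrite /zsin !exprM -/x -/y !exprMn !exprVn exprMn.
  have := expf_neq0 l x0; have := expf_neq0 l y0.
  by set X := x ^+ l; set Y := y ^+ l => Y0 X0; field; rewrite X0 Y0.
rewrite (eq_bigr _ (fun l _ => E l)) !big_split /= !sumrN !sum_unity_root;
  rewrite ?exprVn ?exprMn ?exprVn ?zX_unity ?invr1 ?mulr1 ?invr1 //.
have ratio_eq1 (u v : R) : v != 0 -> (u / v == 1) = (u == v).
  by move=> v0; rewrite -(inj_eq (mulIf v0)) mul1r divfK.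
rewrite invr_eq1 !ratio_eq1 // /x /y -exprD -{1}(expr0 z) !(eq_prim_root_expr z_prim).
rewrite mod0n !modn_small; try lia.
rewrite (_ : (a + b == 0)%N = false); last by lia.
rewrite (eq_sym b a); case: eqP => _; last by rewrite !subrr addr0.
by rewrite sub0r addr0 -opprD -natrD; congr (_ *- _); lia.
Qed.

(* The spectral expression for the number of strip paths from a - 1 to b - 1. *)
Definition spectral_term N a b (l : nat) : R := zsin (a * l) * zsin (b * l) * zcos l ^+ N.
Definition spectral_sum N a b : R :=
  - ((4 * m)%:R)^-1 * \sum_(l < 2 * m) spectral_term N a b l.

Lemma spectral_sum_rec N a b :
  spectral_sum N.+1 a.+1 b = spectral_sum N a b + spectral_sum N (a + 2) b.
Proof.
rewrite /spectral_sum -mulrDr -big_split /=; congr (_ * _); apply: eq_bigr => l _.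
by rewrite /spectral_term -!mulrDl zsin_rec exprS; ring.
Qed.

(* The spectral sum vanishes on both walls a = 0 and a = m. *)
Lemma spectral_sum_wall N a b : (m %| a)%N -> spectral_sum N a b = 0.
Proof.
move=> ma; rewrite /spectral_sum big1 ?mulr0 // => l _.
have /eqP zsin_al : zsin (a * l) == 0 by rewrite zsin_eq0 dvdn_mulr.
by rewrite /spectral_term zsin_al !mul0r.
Qed.

Hypothesis m_gt1 : (1 < m)%N.

(* The transfer matrix of the strip [0, m - 2] is diagonalised by the vectors
   (zsin (a * l))_a, with eigenvalues zcos l. *)
Lemma strip_count_spectral N r s : (r <= m - 2)%N -> (s <= m - 2)%N ->
  (strip_count (m - 2) N r s)%:R = spectral_sum N r.+1 s.+1.
Proof.
elim: N r s => [|N IH] r s hr hs.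
  rewrite /spectral_sum (eq_bigr (fun l : 'I_(2 * m) => zsin (r.+1 * l) * zsin (s.+1 * l)));
    last by move=> l _; rewrite /spectral_term mulr1.
  rewrite zsin_orthogonal; try lia.
  rewrite eqSS /=; case: eqP => _; last by rewrite mulr0.
  by rewrite mulNr mulrN opprK mulVf // pnatr_eq0 muln_eq0 /= eqn0Ngt m_gt0.
rewrite spectral_sum_rec /= natrD; congr (_ + _).
  by case: r hr => [|r] hr; [rewrite spectral_sum_wall ?dvdn0 | apply: IH; lia].
case: ifP => hr'; first by rewrite IH // addn2.
by rewrite spectral_sum_wall //; apply/dvdnP; exists 1%N; lia.
Qed.

Lemma strip_count_sym N r s : (r <= m - 2)%N -> (s <= m - 2)%N ->
  strip_count (m - 2) N r s = strip_count (m - 2) N s r.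
Proof.
move=> hr hs; apply/eqP; rewrite -(eqr_nat R) !strip_count_spectral //; apply/eqP.
rewrite /spectral_sum; congr (_ * _); apply: eq_bigr => l _.
by rewrite /spectral_term (mulrC (zsin (r.+1 * l))).
Qed.

End Spectral.

Section OddModulus.
Variable R : numFieldType.
Variable k : nat.
Local Notation m := (2 * k + 1)%N.
Local Notation K := (2 * k - 1)%N.

Lemma residue_lt x : (x %% m < m)%N.
Proof. by rewrite ltn_pmod // addn1. Qed.

Definition fold_residue a l : nat :=
  let rho := ((a * l.+1) %% m)%N in if (rho <= k)%N then rho else (m - rho)%N.

Lemma fold_residue_le a l : (fold_residue a l <= k)%N.
Proof.
have := residue_lt (a * l.+1).
by rewrite /fold_residue; case: ifP; lia.
Qed.

Lemma fold_residue_gt0 a l : coprime a m -> (l < k)%N -> (0 < fold_residue a l)%N.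
Proof.
move=> co hl; have := residue_lt (a * l.+1).
have : ((a * l.+1) %% m != 0)%N.
  rewrite -/(dvdn m _) Gauss_dvdr; last by rewrite coprime_sym.
  by apply/negP => /dvdn_leq; lia.
by rewrite /fold_residue; case: ifP; lia.
Qed.

Lemma fold_residue_inj a l l' : coprime a m -> (l < k)%N -> (l' < k)%N ->
  fold_residue a l = fold_residue a l' -> l = l'.
Proof.
move=> co hl hl'.
have no_sum := coprime_mul_mod_sum (x := l.+1) (y := l'.+1) co.
have same : ((a * l.+1) %% m = (a * l'.+1) %% m)%N -> l = l'.
  have [h1 h2] : (l.+1 < m)%N /\ (l'.+1 < m)%N by lia.
  by move=> e; have := coprime_mul_mod_inj co h1 h2 e; lia.
rewrite /fold_residue; case: ifP => c1; case: ifP => c2 e.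
- exact: same.
- by move: no_sum (residue_lt (a * l.+1)) (residue_lt (a * l'.+1)); lia.
- by move: no_sum (residue_lt (a * l.+1)) (residue_lt (a * l'.+1)); lia.
- by apply: same; move: (residue_lt (a * l.+1)) (residue_lt (a * l'.+1)); lia.
Qed.

Hypothesis k_gt0 : (0 < k)%N.

Lemma strip_width : K = (m - 2)%N.
Proof. lia. Qed.

Lemma modulus_gt1 : (1 < m)%N.
Proof. lia. Qed.

Lemma fold_sum (G : nat -> R) : G 0%N = 0 ->
  (forall l, (l <= m)%N -> G (m - l)%N = G l) -> (forall l, G (l + m)%N = G l) ->
  \sum_(l < 2 * m) G l = 4%:R * \sum_(l < k) G l.+1.
Proof.
move=> G0 G_reflect G_shift.
have halves : \sum_(0 <= l < 2 * m) G l = 2%:R * \sum_(0 <= l < m) G l.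
  rewrite (big_cat_nat _ (n := m)) ?leq_pmull //= -{2}(add0n m) big_addn.
  rewrite (_ : 2 * m - m = m)%N; last by lia.
  by rewrite (eq_big_nat _ _ (fun i _ => G_shift i)) mulr_natl mulr2n.
have quarters : \sum_(0 <= l < m) G l = 2%:R * \sum_(1 <= l < k.+1) G l.
  rewrite big_ltn ?G0 ?add0r; last by lia.
  rewrite (big_cat_nat _ (n := k.+1)) //=; last by lia.
  rewrite -{2}(add1n k) big_addn (_ : m - k = k.+1)%N; last by lia.
  rewrite [X in _ + X]big_nat_rev mulr_natl mulr2n; congr (_ + _); apply: eq_big_nat => i hi.
  by rewrite -G_reflect; [congr G|]; lia.
rewrite -(big_mkord xpredT G) halves quarters (big_add1 _ _ 0 k.+1) big_mkord mulrA.
by rewrite -natrM.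
Qed.

Variable z : R.
Hypothesis z_prim : (2 * m).-primitive_root z.
Local Notation zs := (zsin z).
Local Notation zc := (zcos z).

Lemma signed_product a b c (X Y Z : R) : ~~ odd (a + b + c) ->
  ((-1) ^+ a * X) * ((-1) ^+ b * Y) * ((-1) ^+ c * Z) = X * Y * Z.
Proof.
move=> ev; have : (-1) ^+ a * (-1) ^+ b * (-1) ^+ c = 1 :> R.
  by rewrite -!exprD -signr_odd (negPf ev).
by move: ((-1) ^+ a) ((-1) ^+ b) ((-1) ^+ c) => sa sb sc h; rewrite -[RHS]mul1r -h; ring.
Qed.

Lemma spectral_term_shift N a b l : ~~ odd (a + b + N) ->
  spectral_term z N a b (l + m) = spectral_term z N a b l.
Proof.
move=> ev; rewrite /spectral_term (mulnDr a) (mulnDr b) !(zsin_shift z_prim) (zcos_shift z_prim) (exprNn (zc l)).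
exact: signed_product.
Qed.

Lemma spectral_term_reflect N a b l : ~~ odd (a + b + N) -> (l <= m)%N ->
  spectral_term z N a b (m - l) = spectral_term z N a b l.
Proof.
move=> ev hl; rewrite /spectral_term (mulnBr a) (mulnBr b) !(zsin_reflect z_prim) ?leq_mul2l ?hl ?orbT //.
rewrite (zcos_reflect z_prim) // (exprNn (zc l)).
rewrite -[- (-1) ^+ a]mulN1r -[- (-1) ^+ b]mulN1r -!exprS.
apply: signed_product; rewrite (_ : a.+1 + b.+1 + N = (a + b + N).+2)%N; last by lia.
by rewrite /= negbK.
Qed.

(* The weight of the l-th eigenvalue in the Hankel determinant. *)
Definition hankel_weight n r s (l : nat) : R :=
  - (m%:R)^-1 * spectral_term z (2 * n + r + s) r.+1 s.+1 l.+1.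

Lemma strip_count_entry n r s i j : (r <= K)%N -> (s <= K)%N ->
  (strip_count K (2 * n + 2 * i + 2 * j + r + s) r s)%:R =
  \sum_(l < k) (zc l.+1 ^+ 2) ^+ i * hankel_weight n r s l * (zc l.+1 ^+ 2) ^+ j.
Proof.
rewrite strip_width => hr hs; rewrite (strip_count_spectral z_prim modulus_gt1) //.
set N := (2 * n + 2 * i + 2 * j + r + s)%N.
have ev : ~~ odd (r.+1 + s.+1 + N).
  by rewrite (_ : r.+1 + s.+1 + N = 2 * (r + s + 1 + n + i + j))%N ?odd_double; lia.
rewrite /spectral_sum fold_sum; first last.
- by move=> l; apply: spectral_term_shift.
- by move=> l; apply: spectral_term_reflect.
- by rewrite /spectral_term !muln0 zsin0 !mul0r.
have four_m : - ((4 * m)%:R)^-1 * 4%:R = - (m%:R)^-1 :> R.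
  have hm : (m%:R : R) != 0 by rewrite pnatr_eq0 addn1.
  by rewrite natrM; field; move: hm; rewrite natrD natrM.
rewrite mulrA four_m mulr_sumr; apply: eq_bigr => l _; rewrite /hankel_weight /spectral_term.
rewrite (_ : N = 2 * n + r + s + 2 * i + 2 * j)%N; last by rewrite /N; lia.
by rewrite -!exprM !exprD; ring.
Qed.

Definition cos2_vandermonde : 'M[R]_k := \matrix_(l < k, j < k) (zc l.+1 ^+ 2) ^+ j.

Definition hankel n r s : 'M[R]_k :=
  \matrix_(i < k, j < k) (strip_count K (2 * n + 2 * i + 2 * j + r + s) r s)%:R.

(* The Hankel matrix factors as V^T D V with V a Vandermonde matrix. *)
Lemma det_hankel n r s : (r <= K)%N -> (s <= K)%N ->
  \det (hankel n r s) = \det cos2_vandermonde ^+ 2 * \prod_(l < k) hankel_weight n r s l.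
Proof.
move=> hr hs.
have -> : hankel n r s = cos2_vandermonde^T *m
    diag_mx (\row_l hankel_weight n r s l) *m cos2_vandermonde.
  apply/matrixP => i j; rewrite !mxE strip_count_entry // mul_mx_diag.
  by apply: eq_bigr => l _; rewrite !mxE.
rewrite !det_mulmx det_tr det_diag expr2 mulrAC; congr (_ * _).
by apply: eq_bigr => l _; rewrite mxE.
Qed.

(* For n = r = s = 0 the Hankel matrix is L L^T, where L (counting paths from 0
   of length 2i to height 2c) is lower unitriangular. *)
Lemma det_hankel0 : \det (hankel 0 0 0) = 1.
Proof.
pose L : 'M[R]_k := \matrix_(i < k, c < k) (strip_count K (2 * i) 0 (2 * c))%:R.
have -> : hankel 0 0 0 = L *m L^T.
  apply/matrixP => i j; rewrite !mxE; under [RHS]eq_bigr do rewrite !mxE -natrM.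
  rewrite -natr_sum (_ : 2 * 0 + 2 * i + 2 * j + 0 + 0 = 2 * i + 2 * j)%N; last by lia.
  rewrite strip_count_cat //.
  rewrite -(big_mkord xpredT (fun h => strip_count K (2 * i) 0 h * strip_count K (2 * j) h 0))%N.
  rewrite (_ : K.+1 = 2 * k)%N; last by lia.
  rewrite sum_even_odd big_mkord; congr _%:R; apply: eq_bigr => c _.
  rewrite (@strip_count_odd K (2 * i) 0 (2 * c).+1); last first.
    by rewrite (_ : 2 * i + 0 + (2 * c).+1 = (2 * (i + c)).+1)%N ?oddS ?odd_double //; lia.
  have hc := ltn_ord c; rewrite mul0n addn0 strip_width.
  by rewrite (strip_count_sym z_prim modulus_gt1 (2 * j) (r := 2 * c)) //; lia.
have L_trig : is_trig_mx L.
  by apply/is_trig_mxP => i j hij; rewrite mxE strip_count_far //; lia.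
rewrite det_mulmx det_tr det_trig // big1 ?mulr1 // => i _; rewrite mxE.
by have hi := ltn_ord i; rewrite -{2}(add0n (2 * i)%N) strip_count_climb //; lia.
Qed.

Lemma zsin_fold a l :
  zs (a * l.+1) = (-1) ^+ ((a * l.+1) %/ m) * zs (fold_residue a l).
Proof.
rewrite {1}(divn_eq (a * l.+1) m) addnC (zsin_shift z_prim); congr (_ * _).
rewrite /fold_residue; case: ifP => // _.
by rewrite (zsin_reflect1 z_prim) // ltnW // residue_lt.
Qed.

(* The sign by which dilation by a permutes the zs(l+1), or 0 if a is not a unit mod m. *)
Definition dilation_sign a : R :=
  if coprime a m then (-1) ^+ (\sum_(l < k) (a * l.+1) %/ m) else 0.

Lemma prod_zsin_coprime a : coprime a m ->
  \prod_(l < k) zs (a * l.+1) =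
  (-1) ^+ (\sum_(l < k) (a * l.+1) %/ m) * \prod_(l < k) zs l.+1.
Proof.
move=> co; rewrite (eq_bigr _ (fun (l : 'I_k) _ => zsin_fold a l)) big_split /= prodrXr.
congr (_ * _).
have lt_k (l : 'I_k) : ((fold_residue a l).-1 < k)%N.
  by have := fold_residue_le a l; lia.
pose h (l : 'I_k) : 'I_k := Ordinal (lt_k l).
have h_inj : injective h.
  move=> l l' /(congr1 val) /= e; apply/val_inj/(fold_residue_inj co (ltn_ord l) (ltn_ord l')).
  by have := fold_residue_gt0 co (ltn_ord l); have := fold_residue_gt0 co (ltn_ord l'); lia.
rewrite [RHS](reindex_inj h_inj) /=; apply: eq_bigr => l _.
by rewrite prednK // fold_residue_gt0.
Qed.

(* If d = gcd(a, m) > 1, the factor with l + 1 = m / d vanishes. *)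
Lemma prod_zsin_vanish a : ~~ coprime a m -> \prod_(l < k) zs (a * l.+1) = 0.
Proof.
move=> nco; set d := gcdn a m.
have d_neq1 : d != 1%N by [].
have d_gt0 : (0 < d)%N by rewrite gcdn_gt0 addn1 orbT.
have dm : (m %/ d * d = m)%N by apply/divnK/dvdn_gcdr.
have le2 : (m %/ d * 2 <= m %/ d * d)%N by rewrite leq_mul2l; lia.
have lt_k : ((m %/ d).-1 < k)%N by lia.
rewrite (bigD1 (Ordinal lt_k)) //= prednK; last by lia.
apply/eqP; rewrite mulf_eq0 (zsin_eq0 z_prim) muln_divCA_gcd.
by rewrite dvdn_mulr.
Qed.

Lemma prod_zsin_dilate a :
  \prod_(l < k) zs (a * l.+1) = dilation_sign a * \prod_(l < k) zs l.+1.
Proof.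
rewrite /dilation_sign; case: ifP => co; first exact: prod_zsin_coprime.
by rewrite mul0r prod_zsin_vanish ?co.
Qed.

(* Dilation by 2, via zs(2y) = zc(y) zs(y), shows that the zc(l+1) multiply to 1. *)
Lemma prod_zcos : \prod_(l < k) zs l.+1 != 0 -> \prod_(l < k) zc l.+1 = 1.
Proof.
move=> nz; have := prod_zsin_dilate 2.
rewrite (eq_bigr _ (fun (l : 'I_k) _ => zsin_double z_prim l.+1)) big_split /= /dilation_sign.
have -> : coprime 2 m by rewrite coprime2n addn1 /= oddM.
have -> : (\sum_(l < k) (2 * l.+1) %/ m = 0)%N.
  by apply: big1 => l _; apply: divn_small; have := ltn_ord l; lia.
rewrite expr0 !mul1r.
by rewrite -{2}(mul1r (\prod_(l < k) zs l.+1)) => /(mulIf nz).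
Qed.

Lemma prod_hankel_weight n r s :
  \prod_(l < k) hankel_weight n r s l =
  (- (m%:R)^-1) ^+ k * \prod_(l < k) zs (r.+1 * l.+1) * \prod_(l < k) zs (s.+1 * l.+1) *
  (\prod_(l < k) zc l.+1) ^+ (2 * n + r + s).
Proof.
rewrite /hankel_weight /spectral_term !big_split /= prodr_const card_ord prodrXl.
by rewrite !mulrA.
Qed.

(* The base case det_hankel0 = 1 forces the zs(l+1) to be nonzero. *)
Lemma prod_zsin_neq0 : \prod_(l < k) zs l.+1 != 0.
Proof.
apply/eqP => P0; have := det_hankel0.
rewrite det_hankel // prod_hankel_weight; under eq_bigr do rewrite mul1n.
by rewrite P0 !(mulr0, mul0r) => /eqP; rewrite eq_sym oner_eq0.
Qed.

Lemma dilation_sign1 : dilation_sign 1 = 1.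
Proof.
rewrite /dilation_sign coprime1n big1 // => l _.
by rewrite mul1n divn_small //; have := ltn_ord l; lia.
Qed.

Lemma prod_hankel_weight_sign n r s :
  \prod_(l < k) hankel_weight n r s l =
  dilation_sign r.+1 * dilation_sign s.+1 * \prod_(l < k) hankel_weight 0 0 0 l.
Proof.
rewrite !prod_hankel_weight !prod_zsin_dilate dilation_sign1 prod_zcos ?prod_zsin_neq0 //.
by rewrite !expr1n; ring.
Qed.

Lemma det_hankel_sign n r s : (r <= K)%N -> (s <= K)%N ->
  \det (hankel n r s) = dilation_sign r.+1 * dilation_sign s.+1.
Proof.
move=> hr hs; rewrite det_hankel // prod_hankel_weight_sign mulrCA.
by rewrite -(det_hankel 0 (leq0n _) (leq0n _)) det_hankel0 mulr1.
Qed.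

End OddModulus.

Theorem theorem56 (n k r s : nat) :
  (1 <= k)%N -> (r <= 2 * k - 1)%N -> (s <= 2 * k - 1)%N ->
  \det (\matrix_(i < k, j < k)
          ((C (2 * n + 2 * i + 2 * j + r + s) (2 * k - 1) r s)%:Z : int))
  = if (gcdn r.+1 (2 * k + 1) == 1%N) && (gcdn s.+1 (2 * k + 1) == 1%N)
    then (-1) ^+ (\sum_(1 <= i < k.+1)
                    ((i * r.+1) %/ (2 * k + 1) + (i * s.+1) %/ (2 * k + 1)))%N
    else 0.
Proof.
move=> k_gt0 hr hs.
have [z z_prim] : {z : algC | (2 * (2 * k + 1)).-primitive_root z}.
  by apply: C_prim_root_exists; rewrite muln_gt0 addn1.
apply: (@intr_inj algC); rewrite -det_map_mx.
rewrite (_ : map_mx _ _ = hankel algC k n r s); last first.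
  by apply/matrixP => i j; rewrite !mxE C_strip_count.
rewrite (det_hankel_sign k_gt0 z_prim) // /dilation_sign /coprime.
rewrite (big_add1 _ _ 0 k.+1) big_mkord big_split /=.
have swap a : (\sum_(i < k) (i.+1 * a) %/ (2 * k + 1) =
               \sum_(l < k) (a * l.+1) %/ (2 * k + 1))%N.
  by apply: eq_bigr => i _; rewrite mulnC.
rewrite !swap.
by case: eqP; case: eqP; rewrite /= ?mulr0 ?mul0r ?rmorph0 // rmorphXn rmorphN1 exprD.
Qed.
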